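(* Let $1\ge l_1\ge l_2\ge\dots\ge l_p>0$ and let $\Omega=J_l$ be the sorted $\ell_1$ (SLOPE) norm. Fix $J\subset\{1,\dots,p\}$ and let $g$ be the gauge norm described in the context, built from all subsets $S\subset\{1,\dots,p\}$ as allowed sets. Then $g(\beta)=l_p\|\beta\|_1$ for all $\beta\in\mathbb{R}^p$.
   Context: $J_l(\beta):=l_1|\beta|_{(1)}+\dots+l_p|\beta|_{(p)}$, where $|\beta|_{(1)}\ge\dots\ge|\beta|_{(p)}$ are the ordered absolute values of the entries of $\beta$. For $S\subset\{1,\dots,p\}$, $\beta_S$ is the vector with entries $\beta_j1\{j\in S\}$, and $|\beta|_{(1,S)}\ge\dots\ge|\beta|_{(|S|,S)}$ denote the ordered values of $\{|\beta_j|:j\in S\}$. Every $S$ is allowed, with $\Omega^{S^{c}}(\beta_{S^{c}}):=\sum_{i=1}^{|S^{c}|}l_{|S|+i}|\beta|_{(i,S^{c})}$, and $\Upsilon_S(\beta):=J_l(\beta_S)+\Omega^{S^{c}}(\beta_{S^{c}})=\sum_{j=1}^{|S|}l_j|\beta|_{(j,S)}+\sum_{i=1}^{|S^{c}|}l_{|S|+i}|\beta|_{(i,S^{c})}$. Let $\beta_{f(J)}:=\beta_J-\beta_{J^{c}}$, $\mathrm{flip}_J(B):=\{\beta_{f(J)}:\beta\in B\}$, $\overline{B}:=\bigcup_{S}\{\beta:\Upsilon_S(\beta)\le1\}$, $B_g:=\mathrm{Conv}(\overline{B}\cup\mathrm{flip}_J(\overline{B}))$, and $g(x):=\inf\{t>0:x\in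 tB_g\}$. *)

From HB Require Import structures.
From mathcomp Require Import all_boot all_order all_algebra.
From mathcomp Require Import classical_sets reals.
Set Implicit Arguments. Unset Strict Implicit. Unset Printing Implicit Defensive.
Import Order.TTheory GRing.Theory Num.Theory.
Local Open Scope ring_scope.
Local Open Scope classical_set_scope.

Section SlopeGauge.
Variables (R : realType) (p : nat).

Definition vec := 'rV[R]_p.

(* weights l_1,...,l_p as a sequence (index k of the seq = l_{k+1}) *)
Definition lseq (l : 'I_p -> R) : seq R := [seq l i | i <- enum 'I_p].

(* |b|_(1,S) >= ... >= |b|_(|S|,S): the decreasingly sorted |b_j|, j in S *)
Definition sorted_abs (b : vec) (S : {set 'I_p}) : seq R :=
  sort (fun x y => y <= x) [seq `|b ord0 j| | j in S].

Definition wsum (w s : seq R) : R := \sum_(k < size s) w`_k * s`_k.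

Definition J_l (l : 'I_p -> R) (b : vec) : R := wsum (lseq l) (sorted_abs b [set: 'I_p]%SET).

Definition restr (b : vec) (S : {set 'I_p}) : vec :=
  \row_j (if j \in S then b ord0 j else 0).

(* Omega^{S^c}(b_{S^c}) = sum_{i=1}^{|S^c|} l_{|S|+i} |b|_(i,S^c) *)
Definition Omega_c (l : 'I_p -> R) (S : {set 'I_p}) (b : vec) : R :=
  wsum (drop #|S| (lseq l)) (sorted_abs b (~: S)).

Definition Upsilon (l : 'I_p -> R) (S : {set 'I_p}) (b : vec) : R :=
  J_l l (restr b S) + Omega_c l S (restr b (~: S)).

Definition flipv (J : {set 'I_p}) (b : vec) : vec := restr b J - restr b (~: J).

Definition flipset (J : {set 'I_p}) (B : set vec) : set vec := flipv J @` B.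

Definition Bbar (l : 'I_p -> R) : set vec :=
  [set b | exists S : {set 'I_p}, Upsilon l S b <= 1].

Definition conv_hull (A : set vec) : set vec :=
  [set x | exists n (w : 'I_n -> R) (y : 'I_n -> vec),
     (forall k, 0 <= w k) /\ \sum_(k < n) w k = 1 /\
     (forall k, A (y k)) /\ x = \sum_(k < n) w k *: y k].

Definition Bg (l : 'I_p -> R) (J : {set 'I_p}) : set vec :=
  conv_hull (Bbar l `|` flipset J (Bbar l)).

Definition gauge (l : 'I_p -> R) (J : {set 'I_p}) (x : vec) : R :=
  inf [set t : R | 0 < t /\ exists2 y, Bg l J y & x = t *: y].

Definition norm1 (b : vec) : R := \sum_j `|b ord0 j|.

End SlopeGauge.

(** Let c = l_p be the smallest weight.  Every weight used by J_l or by
    Omega^{S^c} is at least c, so each Upsilon_S dominates c ||.||_1; the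
    flip preserves ||.||_1, hence B_g lies in the l1-ball of radius 1/c.
    Conversely, for S = {j}^c the only weight seen by a multiple of e_j is
    l_p, so the vectors +-e_j/c lie in Bbar and their convex hull, the whole
    sphere c ||x||_1 = 1, lies in B_g. *)
From mathcomp Require Import all_boot all_order all_algebra.
From mathcomp Require Import classical_sets reals.
Set Implicit Arguments. Unset Strict Implicit. Unset Printing Implicit Defensive.
Import Order.TTheory GRing.Theory Num.Theory.
Local Open Scope ring_scope.
Local Open Scope classical_set_scope.

Lemma drop_size_last (T : Type) (y : T) (s : seq T) :
  drop (size s) (y :: s) = [:: last y s].
Proof. by elim: s y => [|z s IH] y //=. Qed.

Lemma wsum_ge (R : realType) (c : R) (w s : seq R) :
  (forall x, x \in w -> c <= x) -> (size s <= size w)%N ->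
  (forall x, x \in s -> 0 <= x) ->
  c * \sum_(x <- s) x <= wsum w s.
Proof.
move=> w_ge s_size s_ge0; rewrite /wsum (big_nth 0) big_mkord mulr_sumr.
apply: ler_sum => k _; rewrite ler_wpM2r ?s_ge0 ?mem_nth //.
by rewrite w_ge // mem_nth // (leq_trans _ s_size).
Qed.

Section RowVectors.
Variables (R : realType) (p : nat).
Implicit Types (b : vec R p) (S : {set 'I_p}).

Lemma sorted_abs_ge0 b S x : x \in sorted_abs b S -> 0 <= x.
Proof. by rewrite mem_sort => /mapP [j _ ->]. Qed.

Lemma size_sorted_abs b S : size (sorted_abs b S) = #|S|.
Proof. by rewrite size_sort size_map -cardE. Qed.

Lemma sum_sorted_abs b S :
  \sum_(x <- sorted_abs b S) x = \sum_(j in S) `|b ord0 j|.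
Proof. by rewrite (perm_big _ (permEl (perm_sort _ _))) big_map big_enum. Qed.

Lemma sorted_abs_set1 b j : sorted_abs b [set j]%SET = [:: `|b ord0 j|].
Proof.
by rewrite /sorted_abs /image_mem -[enum_mem _]/(enum [set j]%SET) enum_set1.
Qed.

Lemma wsum_sorted_abs_ge (c : R) (w : seq R) b S :
  (forall x, x \in w -> c <= x) -> (#|S| <= size w)%N ->
  c * \sum_(j in S) `|b ord0 j| <= wsum w (sorted_abs b S).
Proof.
move=> w_ge S_size; rewrite -sum_sorted_abs.
by apply: wsum_ge; rewrite ?size_sorted_abs //; apply: sorted_abs_ge0.
Qed.

Lemma wsum_sorted_abs0 (w : seq R) S :
  wsum w (sorted_abs (0 : vec R p) S) = 0.
Proof.
rewrite /wsum big1 // => k _; have := mem_nth 0 (ltn_ord k).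
by rewrite mem_sort => /mapP [j _ ->]; rewrite mxE normr0 mulr0.
Qed.

Lemma restr0 S : restr (0 : vec R p) S = 0.
Proof. by apply/rowP => j; rewrite !mxE if_same. Qed.

Lemma norm1_restr b S : norm1 (restr b S) = \sum_(j in S) `|b ord0 j|.
Proof.
rewrite /norm1 (bigID (mem S)) /= [X in _ + X]big1 ?addr0 => [|j /negbTE jS].
  by apply: eq_bigr => j jS; rewrite mxE jS.
by rewrite mxE jS normr0.
Qed.

Lemma norm1_restrC b S : norm1 (restr b S) + norm1 (restr b (~: S)) = norm1 b.
Proof.
rewrite !norm1_restr /norm1 [RHS](bigID (mem S)) /=; congr (_ + _).
by apply: eq_bigl => j; rewrite inE.
Qed.

Lemma norm1_flipv J b : norm1 (flipv J b) = norm1 b.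
Proof.
apply: eq_bigr => j _; rewrite !mxE inE.
by case: (j \in J); rewrite ?subr0 ?sub0r ?normrN.
Qed.

Lemma norm1Z (t : R) b : norm1 (t *: b) = `|t| * norm1 b.
Proof. by rewrite /norm1 mulr_sumr; apply: eq_bigr => j _; rewrite mxE normrM. Qed.

Lemma norm1_convex n (w : 'I_n -> R) (y : 'I_n -> vec R p) :
  (forall k, 0 <= w k) ->
  norm1 (\sum_(k < n) w k *: y k) <= \sum_(k < n) w k * norm1 (y k).
Proof.
move=> w_ge0; rewrite /norm1.
under [X in _ <= X]eq_bigr do rewrite mulr_sumr.
rewrite exchange_big /=; apply: ler_sum => j _.
rewrite summxE; apply: le_trans (ler_norm_sum _ _ _) _.
by apply: ler_sum => k _; rewrite mxE normrM ger0_norm.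
Qed.

Lemma conv_hull_sub (A : set (vec R p)) : A `<=` conv_hull A.
Proof.
move=> x Ax; exists 1%N, (fun=> 1), (fun=> x).
by rewrite !big_ord1 scale1r; do !split.
Qed.

Lemma conv_hull_norm1_le (A : set (vec R p)) (c : R) x :
  0 <= c -> (forall y, A y -> c * norm1 y <= 1) ->
  conv_hull A x -> c * norm1 x <= 1.
Proof.
move=> c_ge0 A_le [n [w [y [w_ge0 [w_sum1 [Ay ->]]]]]].
rewrite (le_trans (ler_wpM2l c_ge0 (@norm1_convex n w y w_ge0))) //.
rewrite mulr_sumr -w_sum1; apply: ler_sum => k _.
by rewrite mulrCA ler_piMr ?A_le.
Qed.

Lemma norm1_eq0 b : (norm1 b == 0) = (b == 0).
Proof.
apply/idP/eqP => [|->]; last by rewrite /norm1 big1 // => j _; rewrite mxE normr0.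
rewrite psumr_eq0 // => /allP b0; apply/rowP => j; rewrite mxE.
by apply/normr0_eq0/eqP; have /implyP := b0 j (mem_index_enum _); apply.
Qed.

Lemma norm1_ge0 b : 0 <= norm1 b.
Proof. exact: sumr_ge0. Qed.

Lemma inf_gauge_norm1 (B : set (vec R p)) (c : R) x :
  0 < c -> B 0 -> (forall y, B y -> c * norm1 y <= 1) ->
  (forall y, c * norm1 y = 1 -> B y) ->
  inf [set t : R | 0 < t /\ exists2 y, B y & x = t *: y] = c * norm1 x.
Proof.
move=> c_gt0 B0 B_le B_sphere; set T := [set t | _].
have T_lb : lbound T (c * norm1 x).
  move=> t [t_gt0 [y By ->]].
  by rewrite norm1Z gtr0_norm // mulrCA ler_piMr ?B_le ?ltW.
have T_near e : 0 < e -> exists2 t, T t & t <= c * norm1 x + e.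
  move=> e_gt0; have [N0|N_neq0] := eqVneq (norm1 x) 0.
    exists e; last by rewrite N0 mulr0 add0r.
    split => //; exists 0 => //.
    by move/eqP: N0; rewrite norm1_eq0 => /eqP ->; rewrite scaler0.
  have cN_gt0 : 0 < c * norm1 x by rewrite mulr_gt0 // lt0r N_neq0 norm1_ge0.
  exists (c * norm1 x); last by rewrite lerDl ltW.
  split => //; exists ((c * norm1 x)^-1 *: x).
    by apply: B_sphere; rewrite norm1Z gtr0_norm ?invr_gt0 // mulrCA mulVf ?gt_eqF.
  by rewrite scalerA mulfV ?gt_eqF ?scale1r.
have T_inf : has_inf T.
  by split; [have [t Tt _] := T_near 1 ltr01; exists t | exists (c * norm1 x)].
apply/eqP; rewrite eq_le (lb_le_inf T_inf.1 T_lb) andbT.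
apply/ler_addgt0Pr => e /T_near [t Tt t_le].
exact: le_trans (ge_inf T_inf.2 Tt) t_le.
Qed.

End RowVectors.

Section SlopeBall.
Variables (R : realType) (p : nat) (l : 'I_p -> R).
Let c := last 0 (lseq l).
Hypothesis lseq_ge : forall x, x \in lseq l -> c <= x.
Hypothesis c_gt0 : 0 < c.

Lemma size_lseq : size (lseq l) = p.
Proof. by rewrite size_map size_enum_ord. Qed.

Lemma Upsilon_ge (S : {set 'I_p}) (b : vec R p) : c * norm1 b <= Upsilon l S b.
Proof.
rewrite -(norm1_restrC b S) mulrDr; apply: lerD.
  have -> : norm1 (restr b S) = \sum_(j in [set: 'I_p]%SET) `|restr b S ord0 j|.
    by apply: eq_bigl => j; rewrite inE.
  by apply: wsum_sorted_abs_ge; rewrite // size_lseq cardsT card_ord.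
rewrite norm1_restr.
have -> : \sum_(j in ~: S) `|b ord0 j| = \sum_(j in ~: S) `|restr b (~: S) ord0 j|.
  by apply: eq_bigr => j jS; rewrite mxE jS.
apply: wsum_sorted_abs_ge => [x /mem_drop|]; first exact: lseq_ge.
have := cardsC S; rewrite card_ord => cardS.
by rewrite size_drop size_lseq leq_subRL ?cardS // -[leqRHS]cardS leq_addr.
Qed.

Lemma Bg_norm1_le J x : Bg l J x -> c * norm1 x <= 1.
Proof.
apply: conv_hull_norm1_le; first exact: ltW.
move=> y [[S]|[z [S Sz] <-]]; first exact: le_trans (Upsilon_ge S y).
by rewrite norm1_flipv; exact: le_trans (Upsilon_ge S z) Sz.
Qed.

Lemma Bbar0 : Bbar l 0.
Proof.
exists [set: 'I_p]%SET.
by rewrite /Upsilon !restr0 /J_l /Omega_c !wsum_sorted_abs0 addr0.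
Qed.

Lemma drop_lseq : (0 < p)%N -> drop p.-1 (lseq l) = [:: c].
Proof.
rewrite /c; move: size_lseq; case: (lseq l) => [<-|y s <-] //= _.
exact: drop_size_last.
Qed.

Lemma Bbar_scale_delta (j : 'I_p) (a : R) : c * `|a| <= 1 -> Bbar l (a *: 'e_j).
Proof.
move=> ca_le1; exists (~: [set j])%SET; rewrite /Upsilon.
have -> : restr (a *: 'e_j) (~: [set j]) = 0 :> vec R p.
  apply/rowP => i; rewrite !mxE !inE.
  by case: (i == j); rewrite /= ?andbF ?mulr0.
rewrite /J_l wsum_sorted_abs0 add0r /Omega_c finset.setCK sorted_abs_set1.
rewrite cardsC1 card_ord drop_lseq ?(leq_ltn_trans _ (ltn_ord j)) //.
by rewrite /wsum big_ord1 !mxE inE !eqxx mulr1.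
Qed.

Lemma sphere_Bg J y : c * norm1 y = 1 -> Bg l J y.
Proof.
move=> cN1; exists p, (fun k => c * `|y ord0 k|).
exists (fun k => (Num.sg (y ord0 k) / c) *: 'e_k).
split; first by move=> k; rewrite mulr_ge0 // ltW.
split; first by rewrite -mulr_sumr.
split.
  move=> k; left; apply: Bbar_scale_delta.
  rewrite normrM normfV (gtr0_norm c_gt0) mulrCA mulfV ?gt_eqF // mulr1 normr_sg.
  by case: (y ord0 k != 0).
rewrite {1}(row_sum_delta y); apply: eq_bigr => k _; rewrite scalerA.
by rewrite mulrC mulrA mulfVK ?gt_eqF // -numEsg.
Qed.

End SlopeBall.

Lemma last_lseq_ord_max (R : realType) n (l : 'I_n.+1 -> R) :
  last 0 (lseq l) = l ord_max.
Proof.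
rewrite -nth_last size_lseq (nth_map ord_max) ?size_enum_ord //.
by congr l; apply: val_inj; rewrite /= nth_enum_ord.
Qed.

Theorem lemma4 (R : realType) (p : nat) (l : 'I_p -> R) (J : {set 'I_p}) :
  (0 < p)%N ->
  (forall i, l i <= 1) ->
  (forall i j : 'I_p, (i <= j)%N -> l j <= l i) ->
  (forall i, 0 < l i) ->
  forall beta : 'rV[R]_p, gauge l J beta = last 0 (lseq l) * norm1 beta.
Proof.
case: p l J => [|n] l J // _ _ l_decr l_gt0 beta.
have c_min x : x \in lseq l -> last 0 (lseq l) <= x.
  by rewrite last_lseq_ord_max => /mapP [i _ ->]; apply: l_decr; rewrite -ltnS.
have c_gt0 : 0 < last 0 (lseq l) by rewrite last_lseq_ord_max.
apply: inf_gauge_norm1 => //.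
- exact/conv_hull_sub/or_introl/Bbar0.
- exact: Bg_norm1_le.
- exact: sphere_Bg.
Qed.
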